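(* For every $N\in\mathbb{N}^*$, \[ R(N)=-2\sum_{k=1}^N\ \sum_{\substack{1\le i\le A(k)-1\\ \rho_i(k)-\rho_{i-1}(k)\ge 1/N>\rho_{i+1}(k)-\rho_i(k)}} B_1\big(N\rho_i(k)\big). \]
   Context: For $E\subset\mathbb{R}$, $q(E)=\min\{q\in\mathbb{N}^*:\exists p\in\mathbb{Z},\ p/q\in E\}$ ($=\infty$ if $E\cap\mathbb{Q}=\emptyset$). For $t\in\mathbb{R}$ and $\delta>0$, $q(t,\delta)=q(]t-\delta,t])$. $S(N)=\sum_{j=1}^N q\big(](j-1)/N,j/N]\big)$ and $R(N)=S(N)-N\int_0^1 q(t,1/N)\,dt$. For $k\in\mathbb{N}^*$, $A(k)=\sum_{n\le k}\varphi(n)$ ($\varphi$ Euler's totient), and $0=\rho_0(k)<\rho_1(k)<\dots<\rho_{A(k)}(k)=1$ are the elements of $[0,1]$ that are rational numbers $p/q$ in lowest terms with $1\le q\le k$ (the Farey fractions of order $k$ in $[0,1]$). $B_1(x)=0$ if $x\in\mathbb{Z}$ and $B_1(x)=\{x\}-1/2$ otherwise. *)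

From mathcomp Require Import all_boot all_algebra.
From Stdlib Require Import Reals ZArith ClassicalEpsilon.
From Coquelicot Require Import Coquelicot.

Open Scope R_scope.

Definition has_frac (E : R -> Prop) (q : nat) : Prop :=
  q <> 0%nat /\ exists p : Z, E (IZR p / INR q).

(* q(E) = least such q; convention 0 when no rational lies in E
   (the paper's value is +oo; this case never occurs below). *)
Definition qset (E : R -> Prop) : nat :=
  match excluded_middle_informative (exists q, has_frac E q) with
  | left _ => epsilon (inhabits 0%nat)
                (fun q => has_frac E q /\ forall m, has_frac E m -> le q m)
  | right _ => 0%nat
  end.

Definition qtd (t delta : R) : nat := qset (fun x => t - delta < x <= t).

Definition S_N (N : nat) : R :=
  sum_n_m (fun j => INR (qset (fun x => INR (j - 1) / INR N < x <= INR j / INR N)))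
          1 N.

Definition R_N (N : nat) : R :=
  S_N N - INR N * RInt (fun t => INR (qtd t (/ INR N))) 0 1.

Definition int2Z (z : int) : Z :=
  match z with
  | Posz n => Z.of_nat n
  | Negz n => (- Z.of_nat n.+1)%Z
  end.

Definition rat2R (x : rat) : R := IZR (int2Z (numq x)) / IZR (int2Z (denq x)).

Definition farey_list (k : nat) : seq rat :=
  sort (fun x y : rat => preorder.Order.le x y)
       (undup [seq (GRing.mul (GRing.natmul (@GRing.one rat) p) (GRing.inv (GRing.natmul (@GRing.one rat) q))) | q <- seq.iota 1%nat k, p <- seq.iota 0%nat q.+1]).

Definition rho (k i : nat) : R := rat2R (nth (@GRing.zero rat) (farey_list k) i).

Definition A (k : nat) : nat := (\sum_(1 <= n < k.+1) totient n)%N.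

Definition B1_saw (x : R) : R :=
  if Req_EM_T (frac_part x) 0 then 0 else frac_part x - / 2.

(* For t in ]0, 1] the fraction with denominator N lies in ]t - 1/N, t], so
   q(t, 1/N) is 1 plus the number of orders k <= N whose Farey fractions all miss
   this window. As the window has length 1/N, the fractions of order k miss it
   exactly when t lies in [rho_(i-1) + 1/N, rho_i) for some i. Thus S(N) counts
   the grid points j/N in these intervals while N * int q(t, 1/N) adds up N times
   their lengths; for a gap of length >= 1/N the difference is
   D(rho_i) - D(rho_(i-1)), where D(y) = ceil(N y) - N y is 1/N-periodic.
   Summation by parts in i keeps D(rho_i) exactly where a long gap meets a short
   one, with a sign given by their order; the symmetry rho_(A-i) = 1 - rho_i
   swaps the two orders, and D(x) - D(1 - x) = -2 B_1(N x). *)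

From HB Require Import structures.
From mathcomp Require Import all_boot all_algebra zify.
From Stdlib Require Import Reals Lra Lia ClassicalEpsilon ZArith.
From Stdlib Require Import FunctionalExtensionality PropExtensionality.
From Coquelicot Require Import Coquelicot.

Import order.Order.TTheory order.Order.Syntax GRing.Theory Num.Theory.
Open Scope R_scope.

HB.instance Definition _ := Monoid.isComLaw.Build R 0 Rplus
  (fun x y z => esym (Rplus_assoc x y z)) Rplus_comm Rplus_0_l.
HB.instance Definition _ := Monoid.isMulLaw.Build R 0 Rmult Rmult_0_l Rmult_0_r.
HB.instance Definition _ := Monoid.isAddLaw.Build R Rmult Rplus
  Rmult_plus_distr_r Rmult_plus_distr_l.

Notation "\sum_ ( m <= i < n ) F" := (\big[Rplus/0]_(m <= i < n) F) : R_scope.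

Lemma sumRB a b (F G : nat -> R) :
  \sum_(a <= i < b) (F i - G i) = \sum_(a <= i < b) F i - \sum_(a <= i < b) G i.
Proof.
by apply: (big_rec3 (fun x y z => x = y - z)) => [|i y1 y2 y3 _ ->]; ring.
Qed.

Lemma sumR_const a b c : \sum_(a <= i < b) c = INR (b - a) * c.
Proof.
rewrite big_const_nat; elim: (b - a)%nat => [|n IH]; first by rewrite /=; ring.
by rewrite iterS IH S_INR; ring.
Qed.

Lemma sumR_eq_single a b k (F : nat -> R) : (a <= k < b)%nat ->
  (forall i, (a <= i < b)%nat -> i <> k -> F i = 0) -> \sum_(a <= i < b) F i = F k.
Proof.
move=> hk h; rewrite (bigD1_seq k) ?mem_index_iota ?iota_uniq //= big1_seq.
  by rewrite Rplus_0_r.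
move=> i /andP[/eqP hik]; rewrite mem_index_iota => hi; exact: h.
Qed.

Lemma sum_by_parts (a f : nat -> R) m : (0 < m)%nat -> f 0%nat = 0 -> f m = 0 ->
  \sum_(1 <= i < m.+1) a i * (f i - f i.-1) = \sum_(1 <= i < m) (a i - a i.+1) * f i.
Proof.
move=> hm f0 fm.
rewrite (eq_big_nat _ _ (F2 := fun i => a i * f i - a i * f i.-1)); last by move=> i _; ring.
rewrite sumRB big_nat_recr // big_nat_recl //= fm f0.
rewrite (eq_big_nat _ _ (F1 := fun i => (a i - a i.+1) * f i)
  (F2 := fun i => a i * f i - a i.+1 * f i)); last by move=> i _; ring.
by rewrite sumRB; ring.
Qed.

Lemma sum_n_mE (f : nat -> R) a b : sum_n_m f a b = \sum_(a <= i < b.+1) f i.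
Proof.
elim: b => [|b IH].
  case: a => [|a]; first by rewrite sum_n_n big_nat1.
  by rewrite sum_n_m_zero ?big_geq //; lia.
case: (ltngtP a b.+1) => h.
- by rewrite sum_n_Sm ?IH ?[RHS]big_nat_recr //=; apply/ssrnat.leP; lia.
- by rewrite sum_n_m_zero ?big_geq //; apply/ssrnat.ltP.
- by rewrite h sum_n_n big_nat1.
Qed.

Lemma is_RInt_sum (r : seq nat) (f : nat -> R -> R) (I : nat -> R) u v :
  (forall i, i \in r -> is_RInt (f i) u v (I i)) ->
  is_RInt (fun t => \big[Rplus/0]_(i <- r) f i t) u v (\big[Rplus/0]_(i <- r) I i).
Proof.
elim: r => [|i r IH] hr.
  rewrite big_nil; apply: (is_RInt_ext (fun _ => 0)) => [t _|]; first by rewrite big_nil.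
  by have := is_RInt_const u v 0; rewrite scal_zero_r.
apply: (is_RInt_ext (fun t => plus (f i t) (\big[Rplus/0]_(j <- r) f j t))).
  by move=> t _; rewrite big_cons.
rewrite big_cons; apply: is_RInt_plus; first by apply: hr; rewrite inE eqxx.
by apply: IH => j hj; apply: hr; rewrite inE hj orbT.
Qed.

Lemma ltn_INR (a b : nat) : (a < b)%nat <-> INR a < INR b.
Proof. by split => [/ssrnat.ltP/lt_INR | /INR_lt/ssrnat.ltP]. Qed.

Lemma leq_INR (a b : nat) : (a <= b)%nat <-> INR a <= INR b.
Proof. by split => [/ssrnat.leP/le_INR | /INR_le/ssrnat.leP]. Qed.

Lemma INR_subn (a b : nat) : (b <= a)%nat -> INR (a - b) = INR a - INR b.
Proof. by move=> /ssrnat.leP; apply: minus_INR. Qed.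

Lemma INR_gt0 n : (0 < n)%nat -> 0 < INR n.
Proof. exact: (proj1 (ltn_INR 0 n)). Qed.

Definition indic (P : Prop) : R := if excluded_middle_informative P then 1 else 0.

Lemma indicT (P : Prop) : P -> indic P = 1.
Proof. by rewrite /indic; case: excluded_middle_informative. Qed.

Lemma indicF (P : Prop) : ~ P -> indic P = 0.
Proof. by rewrite /indic; case: excluded_middle_informative. Qed.

Lemma indic_iff (P Q : Prop) : (P <-> Q) -> indic P = indic Q.
Proof. by move=> h; case: (classic P) => p; [rewrite !indicT | rewrite !indicF]; tauto. Qed.

Lemma indic_sub (P Q : Prop) : indic P - indic Q = indic (P /\ ~ Q) - indic (~ P /\ Q).
Proof.
have [p|p] := classic P; have [q|q] := classic Q.
- by rewrite (indicT _ p) (indicT _ q) !indicF; try ring; tauto.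
- by rewrite (indicT _ p) (indicF _ q) (@indicT (P /\ ~ Q)) ?indicF; try ring; tauto.
- by rewrite (indicF _ p) (indicT _ q) (@indicT (~ P /\ Q)) ?indicF; try ring; tauto.
- by rewrite (indicF _ p) (indicF _ q) !indicF; try ring; tauto.
Qed.

Definition indic_Ico (u v t : R) : R := indic (u <= t < v).

Lemma indic_IcoE u v t : u <= v -> indic_Ico u v t = indic (t < v) - indic (t < u).
Proof.
move=> huv; rewrite /indic_Ico.
case: (Rlt_or_le t u) => htu.
  by rewrite indicF ?indicT ?(indicT (t < v)); lra.
rewrite (indicF (t < u)); last lra.
by case: (Rlt_or_le t v) => htv; [rewrite !indicT | rewrite !indicF]; lra.
Qed.

Lemma is_RInt_indic_Ico u v : 0 <= u -> v <= 1 ->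
  is_RInt (indic_Ico u v) 0 1 (indic (u <= v) * (v - u)).
Proof.
move=> hu hv.
have is_RInt_cst (c a b : R) (f : R -> R) : a <= b ->
    (forall t, a < t < b -> f t = c) -> is_RInt f a b (c * (b - a)).
  move=> hab hf; apply: (is_RInt_ext (fun _ => c)).
    by move=> t; rewrite Rmin_left ?Rmax_right // => /hf.
  by rewrite Rmult_comm; apply: is_RInt_const.
case: (Rlt_or_le u v) => huv; last first.
  have -> : indic (u <= v) * (v - u) = 0 * (1 - 0).
    by case: (Req_dec u v) => e; [rewrite e | rewrite indicF]; lra.
  by apply: is_RInt_cst => [|t _]; [lra | rewrite /indic_Ico indicF //; lra].
rewrite indicT; last lra.
have -> : 1 * (v - u) = plus (plus (0 * (u - 0)) (1 * (v - u))) (0 * (1 - v)).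
  by rewrite /plus /=; ring.
apply: (is_RInt_Chasles _ 0 v 1); first apply: (is_RInt_Chasles _ 0 u v).
- by apply: is_RInt_cst => [|t ht]; [lra | rewrite /indic_Ico indicF //; lra].
- by apply: is_RInt_cst => [|t ht]; [lra | rewrite /indic_Ico indicT //; lra].
- by apply: is_RInt_cst => [|t ht]; [lra | rewrite /indic_Ico indicF //; lra].
Qed.

(** * Counting grid points *)

Definition count_lt (N : nat) (y : R) : R := \sum_(0 <= j < N.+1) indic (INR j < y).

Lemma sum_indic_ltn n M : \sum_(0 <= j < M) indic (j < n)%nat = INR (minn n M).
Proof.
elim: M => [|M IH]; first by rewrite big_geq // minn0.
rewrite big_nat_recr // IH; have [h|h] := boolP (M < n)%nat.
  have [-> ->] : minn n M = M /\ minn n M.+1 = M.+1 by split; lia.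
  by rewrite indicT // S_INR.
have [-> ->] : minn n M = n /\ minn n M.+1 = n by split; lia.
by rewrite indicF /= ?Rplus_0_r //; apply/negP.
Qed.

Lemma count_ltE N y n : (n <= N.+1)%nat ->
  (forall j : nat, INR j < y <-> (j < n)%nat) -> count_lt N y = INR n.
Proof.
move=> hn h; rewrite /count_lt (eq_big_nat _ _ (F2 := fun j => indic (j < n)%nat)).
  by rewrite sum_indic_ltn (_ : minn n N.+1 = n) //; lia.
by move=> j _; apply: indic_iff.
Qed.

Lemma count_lt_nat N n : (n <= N.+1)%nat -> count_lt N (INR n) = INR n.
Proof. by move=> hn; apply: count_ltE => // j; rewrite ltn_INR. Qed.

Lemma count_lt_open N n y : (n <= N)%nat -> INR n < y < INR n + 1 ->
  count_lt N y = INR n + 1.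
Proof.
move=> hn hy; rewrite -S_INR; apply: count_ltE => // j.
split => h; first by apply/ltn_INR; rewrite S_INR; lra.
by move: h; rewrite ltnS leq_INR; lra.
Qed.

Lemma count_lt_shift N y : 0 <= y <= INR N - 1 -> count_lt N (y + 1) = count_lt N y + 1.
Proof.
move=> hy; rewrite /count_lt big_nat_recl // [in RHS]big_nat_recr //.
rewrite indicT; last by rewrite /=; lra.
rewrite (indicF (INR N < y)); last lra.
rewrite (eq_big_nat _ _ (F1 := fun i => indic (INR i.+1 < y + 1)) (F2 := fun i => indic (INR i < y))).
  by rewrite /=; ring.
by move=> j _; apply: indic_iff; rewrite S_INR; lra.
Qed.

Lemma sum_grid_indic_Ico N u v : (0 < N)%nat -> 0 < u ->
  \sum_(1 <= j < N.+1) indic_Ico u v (INR j / INR N) =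
  indic (u <= v) * (count_lt N (INR N * v) - count_lt N (INR N * u)).
Proof.
move=> hN hu; have hN' := INR_gt0 N hN.
case: (Rle_or_lt u v) => huv; last first.
  rewrite indicF ?Rmult_0_l; last lra.
  by rewrite big1_seq // => j _; rewrite /indic_Ico indicF //; lra.
rewrite indicT // Rmult_1_l /count_lt -sumRB [RHS]big_nat_recl // big_add1.
rewrite !(indicT (INR 0 < _)); try by rewrite /=; nra.
rewrite Rminus_diag Rplus_0_l; apply: eq_big_nat => j _.
by rewrite indic_IcoE //; congr (_ - _); apply: indic_iff; rewrite Rlt_div_l // Rmult_comm.
Qed.

(* [defect N y = ceil (N y) - N y] for [0 <= y <= 1]. *)
Definition defect (N : nat) (y : R) : R := count_lt N (INR N * y) - INR N * y.

Lemma defect_shift N x : (0 < N)%nat -> 0 <= x -> x + / INR N <= 1 ->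
  defect N (x + / INR N) = defect N x.
Proof.
move=> hN hx hx1; have hN' := INR_gt0 N hN.
have e : INR N * (x + / INR N) = INR N * x + 1 by field; lra.
rewrite /defect e count_lt_shift; first ring.
have : INR N * (x + / INR N) <= INR N * 1 by apply: Rmult_le_compat_l; lra.
split; nra.
Qed.

Lemma defect0 N : defect N 0 = 0.
Proof. by rewrite /defect Rmult_0_r -/(INR 0) count_lt_nat //=; ring. Qed.

Lemma defect1 N : defect N 1 = 0.
Proof. by rewrite /defect Rmult_1_r count_lt_nat //; ring. Qed.

Lemma defect_reflect N x : (0 < N)%nat -> 0 <= x <= 1 ->
  defect N x - defect N (1 - x) = -2 * B1_saw (INR N * x).
Proof.
move=> hN hx; have hN' := INR_gt0 N hN.
rewrite /defect (_ : INR N * (1 - x) = INR N - INR N * x); last ring.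
have : 0 <= INR N * x <= INR N by split; nra.
move: (INR N * x) => y hy.
have [hint1 hint2] := base_Int_part y.
have [n hn] : exists n : nat, IZR (Int_part y) = INR n.
  exists (Z.to_nat (Int_part y)); rewrite INR_IZR_INZ Z2Nat.id //.
  have /lt_IZR : -1 < IZR (Int_part y) by lra.
  lia.
have hfrac : frac_part y = y - INR n by rewrite /frac_part hn.
rewrite hn in hint1 hint2; rewrite /B1_saw hfrac; case: (Req_EM_T (y - INR n) 0) => hf /=.
  have ey : y = INR n by lra.
  have hnN : (n <= N)%nat by apply/leq_INR; lra.
  rewrite ey -INR_subn // !count_lt_nat ?INR_subn //; [ring | lia | lia].
have hny : INR n < y by case: (Rle_lt_or_eq_dec _ _ hint1) => // e; lra.
have hnN : (n < N)%nat by apply/ltn_INR; lra.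
rewrite (count_lt_open N n y); [|lia|lra].
rewrite (count_lt_open N (N - n.+1) (INR N - y)); last first.
- by rewrite INR_subn // S_INR; lra.
- lia.
by rewrite INR_subn // S_INR; field.
Qed.

Lemma grid_sub_length N u v : (0 < N)%nat -> 0 <= u -> v <= 1 ->
  \sum_(1 <= j < N.+1) indic_Ico (u + / INR N) v (INR j / INR N)
    - INR N * (indic (u + / INR N <= v) * (v - (u + / INR N)))
  = indic (/ INR N <= v - u) * (defect N v - defect N u).
Proof.
move=> hN hu hv; have hN' := INR_gt0 N hN.
have hd : 0 < / INR N by apply: Rinv_0_lt_compat.
rewrite sum_grid_indic_Ico //; last lra.
rewrite (indic_iff (u + / INR N <= v) (/ INR N <= v - u)); last lra.
case: (Rle_or_lt (/ INR N) (v - u)) => h; last by rewrite indicF; lra.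
rewrite indicT // -(defect_shift N u) //; last lra.
by rewrite /defect; field; lra.
Qed.

(** * Increasing sequences from 0 to 1 *)

Section Partition.

Variables (x : nat -> R) (m : nat).
Hypothesis x_incr : forall i, (i < m)%nat -> x i < x i.+1.
Hypothesis x_first : x 0%nat = 0.
Hypothesis x_last : x m = 1.

Lemma partition_lt i j : (i < j)%nat -> (j <= m)%nat -> x i < x j.
Proof.
elim: j => [//|j IH] hij hj.
case: (ltngtP i j) => h; [|lia|by rewrite h; apply: x_incr].
exact: Rlt_trans (IH h (ltnW hj)) (x_incr j hj).
Qed.

Lemma partition_le i j : (i <= j)%nat -> (j <= m)%nat -> x i <= x j.
Proof.
rewrite leq_eqVlt => /orP[/eqP -> _ | hij hj]; first exact: Rle_refl.
exact/Rlt_le/partition_lt.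
Qed.

Lemma partition_range i : (i <= m)%nat -> 0 <= x i <= 1.
Proof. by move=> hi; rewrite -x_first -x_last; split; apply: partition_le. Qed.

(* The intervals [[x (i-1) + d, x i)] are disjoint: [t] can only lie in the one whose
   right end is the first node [>= t]. *)
Lemma indic_window_empty d t : 0 < d -> 0 < t <= 1 ->
  indic (~ exists i, (i <= m)%nat /\ t - d < x i <= t) =
  \sum_(1 <= i < m.+1) indic_Ico (x i.-1 + d) (x i) t.
Proof.
move=> hd ht.
pose P i := (i <= m)%nat && is_left (Rle_dec t (x i)).
have exP : exists i, P i by exists m; rewrite /P leqnn; case: Rle_dec => //=; lra.
case: (ex_minnP exP) => i0 /andP[hi0m]; case: Rle_dec => //= hti0 _ hmin.
have hi0 : (0 < i0)%nat by case: i0 hi0m hti0 hmin => // _; lra.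
have hprev : x i0.-1 < t.
  apply: Rnot_le_lt => h; have : (i0 <= i0.-1)%nat; last lia.
  by apply: hmin; rewrite /P; case: Rle_dec => //=; rewrite andbT; lia.
rewrite (@sumR_eq_single _ _ i0); last 2 first.
- by apply/andP; split; lia.
- move=> i /andP[hi1 hi2] hne; rewrite /indic_Ico indicF //.
  case: (ltngtP i i0) => h; last by [].
  + suff : x i <= x i0.-1 by lra.
    by apply: partition_le; lia.
  + suff : x i0 <= x i.-1 by lra.
    by apply: partition_le; lia.
rewrite /indic_Ico; apply: indic_iff; split.
- move=> hne; split.
    apply: Rnot_lt_le => h; apply: hne; exists i0.-1; split; [lia | lra].
  apply: Rnot_le_lt => h; apply: hne; exists i0; split => //; lra.
- move=> [h1 h2] [i [him [hi1 hi2]]].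
  case: (ltnP i i0) => h.
    suff : x i <= x i0.-1 by lra.
    by apply: partition_le; lia.
  suff : x i0 <= x i by lra.
  exact: partition_le.
Qed.

Variable N : nat.
Hypothesis N_gt0 : (0 < N)%nat.
Hypothesis x_sym : forall i, (i <= m)%nat -> x (m - i)%nat = 1 - x i.

Lemma sum_long_gaps_defect : (0 < m)%nat ->
  \sum_(1 <= i < m.+1)
     indic (/ INR N <= x i - x i.-1) * (defect N (x i) - defect N (x i.-1))
  = -2 * \sum_(1 <= i < m)
      (if Rle_dec (/ INR N) (x i - x (i - 1)%nat)
       then if Rlt_dec (x (i + 1)%nat - x i) (/ INR N)
            then B1_saw (INR N * x i) else 0
       else 0).
Proof.
move=> hm; set d := / INR N.
pose long i := d <= x i - x i.-1.
rewrite (sum_by_parts (fun i => indic (long i))) //; last 2 first.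
- by rewrite x_first defect0.
- by rewrite x_last defect1.
under eq_big_nat => i _ do rewrite indic_sub Rmult_minus_distr_r.
have reflect_short_long : \sum_(1 <= i < m) indic (~ long i /\ long i.+1) * defect N (x i)
   = \sum_(1 <= i < m) indic (long i /\ ~ long i.+1) * defect N (1 - x i).
  rewrite big_nat_rev; apply: eq_big_nat => i /andP[hi1 hi2].
  rewrite (_ : (1 + m - i.+1 = m - i)%nat) ?x_sym; try lia.
  congr (_ * _); apply: indic_iff; rewrite /long /=.
  have e1 : x (m - i).-1 = 1 - x i.+1 by rewrite -x_sym; [congr x | ]; lia.
  have e2 : x (m - i).+1 = 1 - x i.-1 by rewrite -x_sym; [congr x | ]; lia.
  rewrite x_sym ?e1 ?e2; last lia.
  split=> -[h1 h2]; split; lra.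
rewrite sumRB reflect_short_long -sumRB big_distrr; apply: eq_big_nat => i /andP[hi1 hi2].
rewrite -Rmult_minus_distr_l defect_reflect //; last by apply: partition_range; lia.
rewrite subn1 addn1.
rewrite /long /=; case: Rle_dec => h1; case: Rlt_dec => h2 /=.
- by rewrite indicT; [ring | split; lra].
- by rewrite indicF; [ring | lra].
- by rewrite indicF; [ring | tauto].
- by rewrite indicF; [ring | tauto].
Qed.

End Partition.

(** * Farey fractions *)

Section FareyList.
Local Open Scope ring_scope.

Definition ratn (p q : nat) : rat := p%:R / q%:R.

Definition farey_enum (k : nat) : seq rat :=
  [seq ratn p q | q <- seq.iota 1 k, p <- seq.iota 0%nat q.+1].

Lemma farey_listE k : farey_list k = sort <=%O (undup (farey_enum k)).
Proof. by []. Qed.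

Lemma ratn_eq a b p q : (0 < b)%nat -> (0 < q)%nat ->
  (ratn a b = ratn p q) <-> (a * q = p * b)%nat.
Proof.
move=> hb hq; have hb' : (b%:R : rat) != 0 by rewrite pnatr_eq0 -lt0n.
have hq' : (q%:R : rat) != 0 by rewrite pnatr_eq0 -lt0n.
rewrite /ratn; split => [/eqP|h]; last by apply/eqP; rewrite eqr_div // -!natrM h.
by rewrite eqr_div // -!natrM eqr_nat => /eqP.
Qed.

Lemma ratn_lt a b p q : (0 < b)%nat -> (0 < q)%nat ->
  (ratn a b < ratn p q) = (a * q < p * b)%nat.
Proof.
move=> hb hq; rewrite /ratn ltr_pdivrMr ?ltr0n // mulrAC ltr_pdivlMr ?ltr0n //.
by rewrite -!natrM ltr_nat.
Qed.

Lemma ratn_num_den p q : (0 < q)%nat -> numq (ratn p q) * q%:Z = p%:Z * denq (ratn p q).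
Proof.
move=> hq; apply: (@intr_inj rat); rewrite !intrM numqE.
have hq' : (q%:R : rat) != 0 by rewrite pnatr_eq0 -lt0n.
by rewrite mulrAC /ratn divfK.
Qed.

Lemma ratn0 q : ratn 0 q = 0.
Proof. by rewrite /ratn mul0r. Qed.

Lemma ratnn q : (0 < q)%nat -> ratn q q = 1.
Proof. by move=> hq; rewrite /ratn divff // pnatr_eq0 -lt0n. Qed.

Lemma ratn_compl p q : (0 < q)%nat -> (p <= q)%nat -> 1 - ratn p q = ratn (q - p) q.
Proof.
move=> hq hp; have hq' : (q%:R : rat) != 0 by rewrite pnatr_eq0 -lt0n.
by rewrite /ratn natrB // mulrBl divff.
Qed.

Lemma mem_farey_enum k y : (y \in farey_enum k) <->
  exists q p, [/\ (1 <= q <= k)%nat, (p <= q)%nat & y = ratn p q].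
Proof.
split.
  move/allpairsPdep => [q [p [hq hp ->]]].
  by exists q, p; move: hq hp; rewrite !mem_iota; split => //; lia.
move=> [q [p [hq hp ->]]]; apply/allpairsPdep; exists q, p.
by rewrite !mem_iota; split => //; lia.
Qed.

Lemma mem_farey_list k y : (y \in farey_list k) <->
  exists q p, [/\ (1 <= q <= k)%nat, (p <= q)%nat & y = ratn p q].
Proof. by rewrite farey_listE mem_sort mem_undup mem_farey_enum. Qed.

Lemma farey_list_sorted k : path.sorted <%O (farey_list k).
Proof. by have := sort_lt_sorted (undup (farey_enum k)); rewrite undup_uniq. Qed.

Lemma farey_enumS k :
  farey_enum k.+1 = farey_enum k ++ [seq ratn p k.+1 | p <- seq.iota 0%nat k.+2].
Proof.
have e : seq.iota 1 k.+1 = seq.iota 1 k ++ [:: k.+1] by have := iotaD 1 k 1; rewrite addn1 add1n.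
by rewrite /farey_enum e allpairs_cat /= cats0.
Qed.

Lemma count_iota0 (a : pred nat) n : count a (seq.iota 0%nat n) = (\sum_(0 <= d < n) a d)%nat.
Proof.
elim: n => [|n IH]; first by rewrite big_geq.
have := iotaD 0 n 1; rewrite addn1 => ->.
by rewrite count_cat IH big_nat_recr //= addn0.
Qed.

Lemma ratn_reduce p q : (0 < q)%nat ->
  ratn p q = ratn (p %/ gcdn p q)%nat (q %/ gcdn p q)%nat.
Proof.
move=> hq; have hg : (0 < gcdn p q)%nat by rewrite gcdn_gt0 hq orbT.
apply/ratn_eq => //; first by rewrite divn_gt0 // dvdn_leq // dvdn_gcdr.
have hp := divnK (dvdn_gcdl p q); have hq' := divnK (dvdn_gcdr p q).
move: hp hq'; move: (p %/ gcdn p q)%nat (q %/ gcdn p q)%nat => a b hp hq'.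
nia.
Qed.

Lemma ratn_coprime_notin k p : coprime p k.+1 -> ratn p k.+1 \notin farey_enum k.
Proof.
move=> hcop; apply/negP => /mem_farey_enum [q [a [hq ha /esym/ratn_eq e]]].
have {}e : (a * k.+1 = p * q)%nat by apply: e; lia.
have : (k.+1 %| q)%nat by rewrite -(@Gauss_dvdr _ p) 1?coprime_sym // -e dvdn_mull.
by move/dvdn_leq; lia.
Qed.

Lemma ratn_not_coprime_mem k p : (p <= k.+1)%nat -> ~~ coprime p k.+1 ->
  ratn p k.+1 \in farey_enum k.
Proof.
move=> hp hc; have hg : (1 < gcdn p k.+1)%nat.
  by move: hc; rewrite /coprime; have := gcdn_gt0 p k.+1; rewrite orbT; case: gcdn => [|[]].
rewrite ratn_reduce //; apply/mem_farey_enum.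
exists (k.+1 %/ gcdn p k.+1)%nat, (p %/ gcdn p k.+1)%nat; split; last 2 first.
- exact: leq_div2r.
- by [].
have hq : (0 < k.+1 %/ gcdn p k.+1)%nat.
  by rewrite divn_gt0 ?gcdn_gt0 ?orbT // dvdn_leq // dvdn_gcdr.
by rewrite hq /= -ltnS; apply: ltn_Pdiv.
Qed.

Lemma size_undup_farey_enumS k : (0 < k)%nat ->
  size (undup (farey_enum k.+1)) = (size (undup (farey_enum k)) + totient k.+1)%nat.
Proof.
move=> hk.
set new := [seq ratn p k.+1 | p <- [seq p <- seq.iota 0%nat k.+2 | coprime p k.+1]].
have new_uniq : uniq new.
  rewrite map_inj_in_uniq ?filter_uniq ?iota_uniq // => p p' _ _ /ratn_eq e.
  by apply/eqP; rewrite -(eqn_pmul2r (ltn0Sn k)); apply/eqP/e.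
have new_fresh y : y \in new -> y \notin farey_enum k.
  by move=> /mapP [p]; rewrite mem_filter => /andP[hcop _] ->; apply: ratn_coprime_notin.
have old_or_new y : (y \in farey_enum k.+1) = (y \in farey_enum k) || (y \in new).
  rewrite farey_enumS mem_cat; apply/orP/orP => -[h|h]; [by left | | by left | ].
    move: h => /mapP [p]; rewrite mem_iota => hp ->.
    case hc : (coprime p k.+1); [right | left; apply: ratn_not_coprime_mem; lia].
    by apply/mapP; exists p; rewrite // mem_filter hc mem_iota.
  by move: h => /mapP[p]; rewrite mem_filter => /andP[_ hp] ->; right; apply/mapP; exists p.
have : perm_eq (undup (farey_enum k.+1)) (undup (farey_enum k) ++ new).
  apply: uniq_perm; first exact: undup_uniq.
    rewrite cat_uniq undup_uniq new_uniq andbT /=.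
    by apply/hasPn => y /new_fresh; rewrite mem_undup.
  by move=> y; rewrite mem_cat !mem_undup old_or_new.
move/perm_size ->; rewrite size_cat size_map size_filter count_iota0.
rewrite totient_count_coprime big_nat_recr //= (_ : coprime k.+1 k.+1 = false).
  by rewrite addn0; congr addn; apply: eq_big_nat => d _; rewrite coprime_sym.
by rewrite /coprime gcdnn; apply/negbTE; rewrite eqSS -lt0n.
Qed.

Lemma size_farey_list k : (0 < k)%nat -> size (farey_list k) = (A k).+1.
Proof.
rewrite farey_listE size_sort; elim: k => // -[_ _ | k IH _].
  by rewrite /farey_enum /= /A big_nat1.
by rewrite size_undup_farey_enumS // IH // /A [in RHS]big_nat_recr.
Qed.

Definition farey_nth (k i : nat) : rat := nth 0 (farey_list k) i.

Lemma farey_nth_lt k i j : (i < j)%nat -> (j <= A k)%nat -> (0 < k)%nat ->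
  farey_nth k i < farey_nth k j.
Proof.
move=> hij hj hk.
have mem_idx n : (n <= A k)%nat -> n \in [pred n | (n < size (farey_list k))%nat].
  by rewrite inE size_farey_list.
by rewrite /farey_nth lt_sorted_ltn_nth ?farey_list_sorted ?mem_idx //; lia.
Qed.

Lemma farey_nth_ratn k i : (i <= A k)%nat -> (0 < k)%nat ->
  exists q p, [/\ (1 <= q <= k)%nat, (p <= q)%nat & farey_nth k i = ratn p q].
Proof. by move=> hi hk; apply/mem_farey_list/mem_nth; rewrite size_farey_list. Qed.

Lemma farey_index k p q : (1 <= q <= k)%nat -> (p <= q)%nat ->
  exists2 i, (i <= A k)%nat & farey_nth k i = ratn p q.
Proof.
move=> hq hp; have hin : ratn p q \in farey_list k by apply/mem_farey_list; exists q, p.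
exists (index (ratn p q) (farey_list k)); last by rewrite /farey_nth nth_index.
by rewrite -ltnS -size_farey_list ?index_mem //; lia.
Qed.

Lemma farey_list_compl k y : y \in farey_list k -> 1 - y \in farey_list k.
Proof.
move/mem_farey_list => [q [p [hq hp ->]]]; apply/mem_farey_list.
by exists q, (q - p)%nat; rewrite ratn_compl //; [split => //; lia | lia].
Qed.

Lemma farey_nth_compl k i : (0 < k)%nat -> (i <= A k)%nat ->
  farey_nth k (A k - i) = 1 - farey_nth k i.
Proof.
move=> hk hi; set l := farey_list k.
have hs := size_farey_list k hk.
have e : [seq 1 - y | y <- rev l] = l.
  apply: lt_sorted_eq; first 2 last.
  - move=> y; apply/mapP/idP => [[z hz ->] | hy].
      by apply: farey_list_compl; rewrite -mem_rev.
    by exists (1 - y); rewrite ?mem_rev ?farey_list_compl // opprB addrC subrK.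
  - rewrite sorted_map rev_sorted; apply: sub_sorted (farey_list_sorted k).
    by move=> x y h; rewrite /= ltrD2l ltrN2.
  - exact: farey_list_sorted.
rewrite /farey_nth -/l -{1}e (nth_map 0) ?size_rev ?hs; last lia.
by rewrite nth_rev ?hs; [congr (1 - nth _ _ _); lia | lia].
Qed.

Lemma farey_nth0 k : (0 < k)%nat -> farey_nth k 0 = 0.
Proof.
move=> hk; have [i hi e] := @farey_index k 0 1 ltac:(lia) (leq0n 1).
case: i hi e => [|i] hi e; first by rewrite e ratn0.
have [q [p [hq hp e0]]] := farey_nth_ratn k 0 (leq0n _) hk.
have := farey_nth_lt k 0 i.+1 (ltn0Sn i) hi hk; rewrite e ratn0 e0 /ratn.
by rewrite ltNge divr_ge0 ?ler0n.
Qed.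

Lemma farey_nthA k : (0 < k)%nat -> farey_nth k (A k) = 1.
Proof. by move=> hk; rewrite -[A k]subn0 farey_nth_compl // farey_nth0 // subr0. Qed.

End FareyList.

Lemma int2Z_mul (a b : int) : int2Z (GRing.mul a b) = (int2Z a * int2Z b)%Z.
Proof.
have int2ZE (z : int) : int2Z z = ssrZ.Z_of_int z by case: z => n //=; rewrite addn1.
by rewrite !int2ZE; lia.
Qed.

Lemma rat2R_ratn p q : (0 < q)%nat -> rat2R (ratn p q) = INR p / INR q.
Proof.
move=> hq; have /(congr1 int2Z) := ratn_num_den p q hq; rewrite !int2Z_mul.
have : (0 < int2Z (denq (ratn p q)))%Z.
  by case: (denq _) (denq_gt0 (ratn p q)) => //= n; lia.
rewrite /rat2R; move: (int2Z (numq _)) (int2Z (denq _)) => n d hd e.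
have hq' := INR_gt0 q hq; have hd' : 0 < IZR d by apply: IZR_lt.
have eR : IZR n * INR q = INR p * IZR d by rewrite !INR_IZR_INZ -!mult_IZR e.
by field_simplify_eq; lra.
Qed.

Lemma A_gt0 k : (0 < k)%nat -> (0 < A k)%nat.
Proof. by move=> hk; rewrite /A big_ltn // addn_gt0 totient_gt0. Qed.

Lemma rhoE k i : rho k i = rat2R (farey_nth k i).
Proof. by []. Qed.

Lemma rho_ratn k i : (0 < k)%nat -> (i <= A k)%nat ->
  exists q p, [/\ (1 <= q <= k)%nat, (p <= q)%nat & rho k i = INR p / INR q].
Proof.
move=> hk hi; have [q [p [hq hp e]]] := farey_nth_ratn k i hi hk.
by exists q, p; rewrite !rhoE e rat2R_ratn //; lia.
Qed.

Lemma rho_incr k : (0 < k)%nat -> forall i, (i < A k)%nat -> rho k i < rho k i.+1.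
Proof.
move=> hk i hi.
have [b [a [hb ha e1]]] := farey_nth_ratn k i (ltnW hi) hk.
have [q [p [hq hp e2]]] := farey_nth_ratn k i.+1 hi hk.
have := farey_nth_lt k i i.+1 (ltnSn i) hi hk; rewrite e1 e2 ratn_lt; try lia.
rewrite !rhoE e1 e2 !rat2R_ratn; try lia.
move/ltn_INR; rewrite !mult_INR => h.
have hb' : 0 < INR b by apply: INR_gt0; lia.
have hq' : 0 < INR q by apply: INR_gt0; lia.
have diff_eq : INR p / INR q - INR a / INR b = (INR p * INR b - INR a * INR q) / (INR b * INR q).
  by field; lra.
suff : 0 < (INR p * INR b - INR a * INR q) / (INR b * INR q) by lra.
by apply: Rdiv_lt_0_compat; nra.
Qed.

Lemma rho_first k : (0 < k)%nat -> rho k 0 = 0.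
Proof.
move=> hk; rewrite !rhoE farey_nth0 //.
by rewrite -(ratn0 1) rat2R_ratn // Rdiv_0_l.
Qed.

Lemma rho_last k : (0 < k)%nat -> rho k (A k) = 1.
Proof.
move=> hk; rewrite !rhoE farey_nthA //.
by rewrite -(ratnn 1) // rat2R_ratn // Rdiv_diag //; apply: R1_neq_R0.
Qed.

Lemma rho_compl k i : (0 < k)%nat -> (i <= A k)%nat -> rho k (A k - i) = 1 - rho k i.
Proof.
move=> hk hi; have [q [p [hq hp e]]] := farey_nth_ratn k i hi hk.
rewrite !rhoE farey_nth_compl // e.
rewrite ratn_compl ?rat2R_ratn ?INR_subn //; try lia.
have hq0 := INR_gt0 q ltac:(lia); field; lra.
Qed.

Lemma rho_range k i : (0 < k)%nat -> (i <= A k)%nat -> 0 <= rho k i <= 1.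
Proof.
move=> hk; apply: partition_range; [exact: rho_incr | exact: rho_first | exact: rho_last].
Qed.

Lemma small_denom_in_window_rho N k t : (0 < k)%nat -> (k <= N)%nat -> 0 <= t <= 1 ->
  (exists q, (1 <= q <= k)%nat /\ has_frac (fun y => t - / INR N < y <= t) q) <->
  (exists i, (i <= A k)%nat /\ t - / INR N < rho k i <= t).
Proof.
move=> hk hkN ht; have hN := INR_gt0 N ltac:(lia).
split=> [[q [hq [_ [z hz]]]] | [i [hi hwin]]]; last first.
  have [q [p [hq hp e]]] := rho_ratn k i hk hi.
  by exists q; split; [|split; [lia | exists (Z.of_nat p); rewrite -INR_IZR_INZ -e]].
have hq' := INR_gt0 q ltac:(lia).
have hNq : / INR N <= / INR q by apply: Rinv_le_contravar => //; apply/leq_INR; lia.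
have hz0 : (0 <= z)%Z.
  suff /lt_IZR : -1 < IZR z by lia.
  have : -1 / INR q < IZR z / INR q by rewrite /Rdiv; lra.
  by move/Rmult_lt_reg_r; apply; apply: Rinv_0_lt_compat.
have hzq : (z <= Z.of_nat q)%Z.
  apply: le_IZR; rewrite -INR_IZR_INZ.
  by have := proj1 (Rle_div_l (IZR z) 1 (INR q) hq'); lra.
have [i hi e] := @farey_index k (Z.to_nat z) q hq ltac:(lia).
exists i; split => //.
rewrite !rhoE e rat2R_ratn; last lia.
by rewrite (INR_IZR_INZ (Z.to_nat z)) Z2Nat.id.
Qed.

(** * Least denominators *)

Lemma qset_ext (E F : R -> Prop) : (forall x, E x <-> F x) -> qset E = qset F.
Proof.
move=> h; congr qset; apply: functional_extensionality => x.
exact: propositional_extensionality.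
Qed.

Lemma qset_count N E : has_frac E N ->
  INR (qset E) =
  \sum_(0 <= k < N.+1) indic (~ exists q, (1 <= q <= k)%nat /\ has_frac E q).
Proof.
move=> hN; rewrite /qset; case: excluded_middle_informative => [_|]; last by case; exists N.
pose P q := is_left (excluded_middle_informative (has_frac E q)).
have exP : exists q, P q by exists N; rewrite /P; case: excluded_middle_informative.
have [q0 hq0 q0_min] := ex_minnP exP.
pose Pmin q := has_frac E q /\ forall m, has_frac E m -> (q <= m)%coq_nat.
have ex_min : exists q, Pmin q.
  exists q0; split; first by move: hq0; rewrite /P; case: excluded_middle_informative.
  move=> m hm; apply/ssrnat.leP/q0_min; rewrite /P.
  by case: excluded_middle_informative.
set e := epsilon _ _.
have [he e_min] : Pmin e by exact: (epsilon_spec (inhabits 0%nat) Pmin ex_min).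
have heN : (e <= N)%nat by apply/ssrnat.leP/e_min.
have he0 : (0 < e)%nat by case: he => h _; lia.
rewrite (eq_big_nat _ _ (F2 := fun k => indic (k < e)%nat)).
  by rewrite sum_indic_ltn; congr INR; lia.
move=> k _; apply: indic_iff; split => [hne | hke [q [hq /e_min/ssrnat.leP]]]; last lia.
by apply/negP => hek; apply: hne; exists e; split => //; lia.
Qed.

Lemma has_frac_window N t : (0 < N)%nat -> has_frac (fun y => t - / INR N < y <= t) N.
Proof.
move=> hN; have hN' := INR_gt0 N hN; split; first lia.
have [h1 h2] := base_Int_part (INR N * t).
exists (Int_part (INR N * t)); split.
  by apply/Rlt_div_r => //; rewrite Rmult_minus_distr_r Rinv_l; lra.
by apply/Rle_div_l => //; lra.
Qed.

Lemma qtd_gaps N t : (0 < N)%nat -> 0 < t <= 1 ->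
  INR (qtd t (/ INR N)) =
  1 + \sum_(1 <= k < N.+1) \sum_(1 <= i < (A k).+1)
        indic_Ico (rho k i.-1 + / INR N) (rho k i) t.
Proof.
move=> hN ht; have hN' := INR_gt0 N hN.
rewrite /qtd (qset_count N); last exact: has_frac_window.
rewrite big_nat_recl // indicT; last by case=> q [hq _]; lia.
congr Rplus; rewrite big_add1; apply: eq_big_nat => k /andP[_ hk].
have hk0 := ltn0Sn k.
rewrite -(indic_window_empty _ _ (rho_incr _ hk0) (rho_first _ hk0) (rho_last _ hk0) _ _
           (Rinv_0_lt_compat _ hN') ht).
have w := small_denom_in_window_rho N k.+1 t hk0 hk ltac:(lra).
by apply: indic_iff; split => nh h; apply: nh; apply/w.
Qed.

Lemma S_N_gaps N : (0 < N)%nat ->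
  S_N N = INR N + \sum_(1 <= k < N.+1) \sum_(1 <= i < (A k).+1) \sum_(1 <= j < N.+1)
            indic_Ico (rho k i.-1 + / INR N) (rho k i) (INR j / INR N).
Proof.
move=> hN; have hN' := INR_gt0 N hN.
rewrite /S_N sum_n_mE (eq_big_nat _ _ (F2 := fun j => 1 + \sum_(1 <= k < N.+1)
    \sum_(1 <= i < (A k).+1) indic_Ico (rho k i.-1 + / INR N) (rho k i) (INR j / INR N))).
  rewrite big_split /= sumR_const subn1 Rmult_1_r; congr Rplus.
  by rewrite exchange_big_nat; apply: eq_big_nat => k _; rewrite exchange_big_nat.
move=> j /andP[hj1 hj2]; have hj : 0 < INR j by apply: INR_gt0.
have hjN : INR j <= INR N by apply/leq_INR.
rewrite -qtd_gaps //; last by split; [apply: Rdiv_lt_0_compat | apply/Rle_div_l; lra].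
congr INR; apply: qset_ext => y.
have -> : INR (j - 1) / INR N = INR j / INR N - / INR N.
  by rewrite INR_subn //=; field; lra.
by [].
Qed.

Lemma RInt_qtd_gaps N : (0 < N)%nat ->
  RInt (fun t => INR (qtd t (/ INR N))) 0 1 =
  1 + \sum_(1 <= k < N.+1) \sum_(1 <= i < (A k).+1)
        indic (rho k i.-1 + / INR N <= rho k i) * (rho k i - (rho k i.-1 + / INR N)).
Proof.
move=> hN; have hd : 0 < / INR N by apply/Rinv_0_lt_compat/INR_gt0.
apply: is_RInt_unique; apply: (is_RInt_ext (fun t => plus 1 (\sum_(1 <= k < N.+1)
    \sum_(1 <= i < (A k).+1) indic_Ico (rho k i.-1 + / INR N) (rho k i) t))).
  move=> t; rewrite Rmin_left ?Rmax_right; try lra.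
  by move=> ht; rewrite qtd_gaps //; lra.
apply: is_RInt_plus.
  by have := is_RInt_const 0 1 1; rewrite /scal /= /mult /= Rminus_0_r Rmult_1_r.
apply: is_RInt_sum => k; rewrite mem_index_iota => /andP[hk _].
apply: is_RInt_sum => i; rewrite mem_index_iota => /andP[hi1 hi2].
apply: is_RInt_indic_Ico.
  by have := @rho_range k i.-1 hk ltac:(lia); lra.
by have := @rho_range k i hk ltac:(lia); lra.
Qed.

Theorem proposition5 (N : nat) (HN : (0 < N)%nat) :
  R_N N =
  -2 * sum_n_m (fun k =>
         sum_n_m (fun i =>
           if Rle_dec (/ INR N) (rho k i - rho k (i - 1)%nat)
           then if Rlt_dec (rho k (i + 1)%nat - rho k i) (/ INR N)
                then B1_saw (INR N * rho k i) else 0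
           else 0)
         1%nat (A k - 1)%nat)
       1%nat N.
Proof.
have cancel_N (a b c : R) : a + b - a * (1 + c) = b - a * c by ring.
rewrite /R_N S_N_gaps // RInt_qtd_gaps // cancel_N big_distrr -sumRB.
rewrite sum_n_mE big_distrr; apply: eq_big_nat => k /andP[hk _].
rewrite big_distrr -sumRB.
under eq_big_nat => i /andP[hi1 hi2].
  rewrite grid_sub_length //; first over.
  - by have := @rho_range k i.-1 hk ltac:(lia); lra.
  - by have := @rho_range k i hk ltac:(lia); lra.
rewrite (sum_long_gaps_defect _ _ (rho_incr k hk) (rho_first k hk) (rho_last k hk) _ HN
  (fun i => rho_compl k i hk) (A_gt0 k hk)).
by rewrite sum_n_mE subn1 prednK // A_gt0.
Qed.
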